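(* Let $R$ be an associative ring with identity and $M$ a left $R$-module which is projective in $\sigma[M]$. Then $Nil_*(M)\subseteq Rad(M)$.
   Context: $\Lambda^{fi}(M)$ is the set of fully invariant submodules of $M$. For $N,L\leq M$, $N_ML=\sum\{f(N)\mid f\in\mathrm{Hom}_R(M,L)\}$. $Spec(\Lambda^{fi}(M))$ is the set of $Q\in\Lambda^{fi}(M)$, $Q\neq M$, such that for all $N,L\in\Lambda^{fi}(M)$, $N_ML\subseteq Q$ implies $N\subseteq Q$ or $L\subseteq Q$. The lowest radical of $M$ is $Nil_*(M)=\bigcap\{Q\mid Q\in Spec(\Lambda^{fi}(M))\}$. $Rad(M)$ is the Jacobson radical of $M$ (intersection of all maximal submodules). *)

From HB Require Import structures.
From Stdlib Require List.
From mathcomp Require Import all_boot all_algebra.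
Set Implicit Arguments. Unset Strict Implicit. Unset Printing Implicit Defensive.
Import GRing.Theory.
Local Open Scope ring_scope.

(* Left R-modules are MathComp's [lmodType R] over an associative ring with
   identity [R : pzRingType]; R-homomorphisms M -> L are [{linear M -> L}].
   Submodules of M are predicates [M -> Prop]. *)

Section ModuleDefs.
Variable R : pzRingType.

Definition is_submod (M : lmodType R) (N : M -> Prop) : Prop :=
  N 0 /\ (forall x y, N x -> N y -> N (x + y)) /\
  (forall (r : R) x, N x -> N (r *: x)).

Definition subm (M : Type) (A B : M -> Prop) : Prop := forall x, A x -> B x.

Definition fully_invariant (M : lmodType R) (N : M -> Prop) : Prop :=
  is_submod N /\ forall (f : {linear M -> M}) x, N x -> N (f x).

(* N_M L = sum { f(N) | f in Hom_R(M, L) }, L <= M; the sum of submodules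
   consists of the finite sums of their elements. *)
Definition prodM (M : lmodType R) (N L : M -> Prop) : M -> Prop :=
  fun x => exists s : seq ({linear M -> M} * M),
    (forall p, List.In p s -> (forall m, L (p.1 m)) /\ N p.2) /\
    x = \sum_(p <- s) p.1 p.2.

Definition fi_prime (M : lmodType R) (Q : M -> Prop) : Prop :=
  fully_invariant Q /\ (exists x, ~ Q x) /\
  forall N L : M -> Prop, fully_invariant N -> fully_invariant L ->
    subm (prodM N L) Q -> subm N Q \/ subm L Q.

Definition lowest_radical (M : lmodType R) : M -> Prop :=
  fun x => forall Q, fi_prime Q -> Q x.

Definition maximal_submod (M : lmodType R) (K : M -> Prop) : Prop :=
  is_submod K /\ (exists x, ~ K x) /\
  forall K' : M -> Prop, is_submod K' -> subm K K' ->
    subm K' K \/ (forall x, K' x).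

Definition Rad (M : lmodType R) : M -> Prop :=
  fun x => forall K, maximal_submod K -> K x.

Definition M_generated (M L : lmodType R) : Prop :=
  forall y : L, exists s : seq ({linear M -> L} * M),
    y = \sum_(p <- s) p.1 p.2.

Definition in_sigma (M N : lmodType R) : Prop :=
  exists (L : lmodType R) (i : {linear N -> L}),
    M_generated M L /\ injective i.

Definition projective_in_sigma (M : lmodType R) : Prop :=
  in_sigma M M /\
  forall (N : lmodType R), in_sigma M N ->
  forall (L : lmodType R) (g : {linear N -> L}), (forall y : L, exists x : N, g x = y) ->
  forall f : {linear M -> L}, exists h : {linear M -> N},
    forall m, g (h m) = f m.
End ModuleDefs.

(* For a maximal submodule K of M, the largest fully invariant submodule
   contained in K, namely {y | f y ∈ K for every endomorphism f}, is a prime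
   element of Λ^{fi}(M): if L ⊄ that core then K + L = M, so projectivity
   lifts the projection M → M/K along L → M/K to some e ∈ Hom(M, L), and every
   n in N satisfies n ≡ e n mod K with e n ∈ N_M L ⊆ K.  Hence Nil_*(M) lies in
   every maximal submodule. *)

From HB Require Import structures.
From mathcomp Require Import all_boot all_algebra.
From Stdlib Require Import Classical ClassicalEpsilon FunctionalExtensionality PropExtensionality.
Set Implicit Arguments. Unset Strict Implicit. Unset Printing Implicit Defensive.
Import GRing.Theory.
Local Open Scope ring_scope.

Section SubmoduleClosure.
Variables (R : pzRingType) (M : lmodType R) (K : M -> Prop).
Hypothesis hK : is_submod K.

Lemma submod0 : K 0.
Proof. by case: hK. Qed.

Lemma submodD x y : K x -> K y -> K (x + y).
Proof. by case: hK => _ [hD _]; apply: hD. Qed.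

Lemma submodZ (r : R) x : K x -> K (r *: x).
Proof. by case: hK => _ [_ hZ]; apply: hZ. Qed.

Lemma submodN x : K x -> K (- x).
Proof. by rewrite -scaleN1r; apply: submodZ. Qed.

Lemma submodB x y : K x -> K y -> K (x - y).
Proof. by move=> Kx Ky; apply/submodD/submodN. Qed.

End SubmoduleClosure.

Section SubmoduleType.
Variables (R : pzRingType) (M : lmodType R) (L : M -> Prop).
Hypothesis hL : is_submod L.

Definition mem_submod : {pred M} :=
  fun x => if excluded_middle_informative (L x) then true else false.

Lemma mem_submodP x : reflect (L x) (x \in mem_submod).
Proof. by rewrite unfold_in /mem_submod; case: excluded_middle_informative; constructor. Qed.

Lemma mem_submod_closed : subsemimod_closed mem_submod.
Proof.
split; first split.
- exact/mem_submodP/(submod0 hL).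
- by move=> x y /mem_submodP Lx /mem_submodP Ly; apply/mem_submodP/(submodD hL).
- by move=> r x /mem_submodP Lx; apply/mem_submodP/(submodZ hL).
Qed.

HB.instance Definition _ := GRing.isSubmodClosed.Build R M mem_submod mem_submod_closed.

(* The dummy [let] makes the type mention [hL], so that the instances below,
   which depend on [hL], can be found from the type alone. *)
Definition submod_type := let _ := hL in {x : M | x \in mem_submod}.
HB.instance Definition _ := [isSub of submod_type for @sval _ _].
HB.instance Definition _ := [Choice of submod_type by <:].
HB.instance Definition _ := [SubChoice_isSubLmodule of submod_type by <:].

Lemma submod_typeP (a : submod_type) : L (val a).
Proof. exact/mem_submodP/valP. Qed.

End SubmoduleType.

Section QuotientModule.
Variables (R : pzRingType) (M : lmodType R) (K : M -> Prop).
Hypothesis hK : is_submod K.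

Definition coset_repr (x : M) : M := epsilon (inhabits 0) (fun y => K (x - y)).

Lemma coset_reprB x : K (coset_repr x - x).
Proof.
rewrite -opprB; apply/(submodN hK).
apply: (epsilon_spec (inhabits 0) (fun y => K (x - y))).
by exists x; rewrite subrr; apply: submod0.
Qed.

Lemma coset_repr_eq x y : K (x - y) -> coset_repr x = coset_repr y.
Proof.
move=> Kxy; rewrite /coset_repr; congr epsilon.
apply: functional_extensionality => z; apply: propositional_extensionality.
split=> [Kxz | Kyz].
  have -> : y - z = (x - z) - (x - y) by rewrite opprB [RHS]addrC addrA subrK.
  exact: submodB.
have -> : x - z = (x - y) + (y - z) by rewrite addrA subrK.
exact: submodD.
Qed.

Definition quotmod := let _ := hK in {x : M | coset_repr x == x}.
HB.instance Definition _ := Choice.on quotmod.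

Lemma coset_repr_idem x : coset_repr (coset_repr x) == coset_repr x.
Proof. by apply/eqP/coset_repr_eq/coset_reprB. Qed.

Definition quot_pi (x : M) : quotmod := exist _ (coset_repr x) (coset_repr_idem x).

Lemma quot_pi_eq x y : quot_pi x = quot_pi y <-> K (x - y).
Proof.
split=> [/(congr1 sval) /= e | ]; last by move=> ?; apply/val_inj/coset_repr_eq.
have := submodB hK (coset_reprB y) (coset_reprB x).
by rewrite e opprB addrC addrA subrK.
Qed.

Lemma quot_piK (a : quotmod) : quot_pi (sval a) = a.
Proof. by apply: val_inj; case: a => x /= /eqP. Qed.

Lemma quot_ind (P : quotmod -> Prop) : (forall x, P (quot_pi x)) -> forall a, P a.
Proof. by move=> hP a; rewrite -(quot_piK a). Qed.

Definition quot_add (a b : quotmod) := quot_pi (sval a + sval b).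
Definition quot_opp (a : quotmod) := quot_pi (- sval a).
Definition quot_scale (r : R) (a : quotmod) := quot_pi (r *: sval a).

Lemma quot_addE x y : quot_add (quot_pi x) (quot_pi y) = quot_pi (x + y).
Proof.
apply/quot_pi_eq; rewrite opprD addrACA.
exact/(submodD hK)/coset_reprB/coset_reprB.
Qed.

Lemma quot_oppE x : quot_opp (quot_pi x) = quot_pi (- x).
Proof. by apply/quot_pi_eq; rewrite -opprD; apply/(submodN hK)/coset_reprB. Qed.

Lemma quot_scaleE r x : quot_scale r (quot_pi x) = quot_pi (r *: x).
Proof. by apply/quot_pi_eq; rewrite -scalerBr; apply/(submodZ hK)/coset_reprB. Qed.

Lemma quot_addA : associative quot_add.
Proof. by elim/quot_ind=> x; elim/quot_ind=> y; elim/quot_ind=> z; rewrite !quot_addE addrA. Qed.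

Lemma quot_addC : commutative quot_add.
Proof. by elim/quot_ind=> x; elim/quot_ind=> y; rewrite !quot_addE addrC. Qed.

Lemma quot_add0 : left_id (quot_pi 0) quot_add.
Proof. by elim/quot_ind=> x; rewrite quot_addE add0r. Qed.

Lemma quot_addN : left_inverse (quot_pi 0) quot_opp quot_add.
Proof. by elim/quot_ind=> x; rewrite quot_oppE quot_addE addNr. Qed.

HB.instance Definition _ :=
  GRing.isZmodule.Build quotmod quot_addA quot_addC quot_add0 quot_addN.

Lemma quot_piD x y : quot_pi x + quot_pi y = quot_pi (x + y).
Proof. exact: quot_addE. Qed.

Lemma quot_scaleA a b v : quot_scale a (quot_scale b v) = quot_scale (a * b) v.
Proof. by elim/quot_ind: v => x; rewrite !quot_scaleE scalerA. Qed.

Lemma quot_scale1 : left_id 1 quot_scale.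
Proof. by elim/quot_ind=> x; rewrite quot_scaleE scale1r. Qed.

Lemma quot_scaleDr : right_distributive quot_scale +%R.
Proof.
move=> r; elim/quot_ind=> x; elim/quot_ind=> y.
by rewrite quot_piD !quot_scaleE quot_piD scalerDr.
Qed.

Lemma quot_scaleDl v : {morph quot_scale^~ v : a b / a + b}.
Proof. by elim/quot_ind: v => x a b; rewrite !quot_scaleE quot_piD scalerDl. Qed.

HB.instance Definition _ := GRing.Zmodule_isLmodule.Build R quotmod
  quot_scaleA quot_scale1 quot_scaleDr quot_scaleDl.

Lemma quot_pi_linear : linear quot_pi.
Proof. by move=> r x y; rewrite -quot_piD -quot_scaleE. Qed.

HB.instance Definition _ :=
  GRing.isLinear.Build R M quotmod *:%R quot_pi quot_pi_linear.

End QuotientModule.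

Section FullyInvariantCore.
Variables (R : pzRingType) (M : lmodType R).

Definition fi_core (K : M -> Prop) : M -> Prop :=
  fun y => forall f : {linear M -> M}, K (f y).

Lemma fi_core_sub K : subm (fi_core K) K.
Proof. by move=> y /(_ idfun). Qed.

Lemma fi_core_fully_invariant K : is_submod K -> fully_invariant (fi_core K).
Proof.
move=> hK; split; [split; [|split] |].
- by move=> f; rewrite linear0; apply: submod0.
- by move=> x y Kx Ky f; rewrite linearD; apply: submodD.
- by move=> r x Kx f; rewrite linearZ; apply: submodZ.
- by move=> g x Kx f; apply: (Kx (f \o g)).
Qed.

Lemma fully_invariant_sub_fi_core N K :
  fully_invariant N -> subm N K -> subm N (fi_core K).
Proof. by move=> [_ fiN] sNK y Ny f; apply/sNK/fiN. Qed.

Lemma prodM_single (N L : M -> Prop) (e : {linear M -> M}) n :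
  (forall m, L (e m)) -> N n -> prodM N L (e n).
Proof.
move=> Le Nn; exists [:: (e, n)]; split; last by rewrite big_seq1.
by move=> p [<- | []].
Qed.

End FullyInvariantCore.

Section SumOfSubmodules.
Variables (R : pzRingType) (M : lmodType R).

Definition submod_sum (K L : M -> Prop) : M -> Prop :=
  fun y => exists k a, K k /\ L a /\ y = k + a.

Lemma is_submod_sum K L : is_submod K -> is_submod L -> is_submod (submod_sum K L).
Proof.
move=> hK hL; split; last split.
- by exists 0, 0; rewrite addr0; split; [apply: submod0 | split; first apply: submod0].
- move=> _ _ [k [a [Kk [La ->]]]] [k' [a' [Kk' [La' ->]]]].
  exists (k + k'), (a + a'); rewrite addrACA.
  by split; [apply: submodD | split; first apply: submodD].
- move=> r _ [k [a [Kk [La ->]]]]; exists (r *: k), (r *: a); rewrite scalerDr.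
  by split; [apply: submodZ | split; first apply: submodZ].
Qed.

Lemma maximal_submod_sum K L :
  maximal_submod K -> is_submod L -> ~ subm L K -> forall x, submod_sum K L x.
Proof.
move=> [hK [_ maxK]] hL nsLK.
have sKKL : subm K (submod_sum K L).
  by move=> y Ky; exists y, 0; rewrite addr0; split=> //; split=> //; apply: submod0.
case: (maxK _ (is_submod_sum hK hL) sKKL) => // sKLK; case: nsLK => a La.
by apply: sKLK; exists 0, a; rewrite add0r; split=> //; apply: submod0.
Qed.

End SumOfSubmodules.

Lemma in_sigma_inj (R : pzRingType) (M N N' : lmodType R) (i : {linear N' -> N}) :
  injective i -> in_sigma M N -> in_sigma M N'.
Proof.
by move=> inj_i [L [j [genL inj_j]]]; exists L, (j \o i); split=> //; apply: inj_comp.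
Qed.

(* Lift the projection M -> M/K along the surjection L -> M/K. *)
Lemma projective_lift_to_summand (R : pzRingType) (M : lmodType R) (K L : M -> Prop) :
  projective_in_sigma M -> is_submod K -> is_submod L ->
  (forall x, submod_sum K L x) ->
  exists e : {linear M -> M}, (forall m, L (e m)) /\ (forall m, K (e m - m)).
Proof.
move=> [sigM projM] hK hL sumKL.
pose g : {linear submod_type hL -> quotmod hK} := quot_pi hK \o val.
have g_surj : forall q, exists a, g a = q.
  elim/quot_ind => x; have [k [a [Kk [La ->]]]] := sumKL x.
  have La' : a \in mem_submod L by apply/mem_submodP.
  exists (Sub a La' : submod_type hL); rewrite /g /=.
  by apply/quot_pi_eq; rewrite opprD addrCA subrr addr0; apply: submodN.
have sigL : in_sigma M (submod_type hL) by apply: in_sigma_inj sigM; apply: val_inj.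
have [h gh] := projM _ sigL _ g g_surj (quot_pi hK).
exists (val \o h); split=> m; first exact: submod_typeP.
by apply/quot_pi_eq; rewrite -(gh m).
Qed.

Lemma fi_core_prime (R : pzRingType) (M : lmodType R) (K : M -> Prop) :
  projective_in_sigma M -> maximal_submod K -> fi_prime (fi_core K).
Proof.
move=> projM maxK; have [hK [[x0 nKx0] _]] := maxK.
split; first exact: fi_core_fully_invariant.
split; first by exists x0 => /fi_core_sub.
move=> N L fiN fiL sNLK.
have [sLK | nsLK] := classic (subm L (fi_core K)); [by right | left].
have nLK : ~ subm L K by move=> sLK; apply: nsLK; apply: fully_invariant_sub_fi_core.
have [e [Le Ke]] :=
  projective_lift_to_summand projM hK fiL.1 (maximal_submod_sum maxK fiL.1 nLK).
apply: fully_invariant_sub_fi_core => // n Nn.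
have Ken : K (e n) := fi_core_sub (sNLK _ (prodM_single Le Nn)).
have -> : n = e n - (e n - n) by rewrite opprB addrC subrK.
exact: submodB.
Qed.

Theorem proposition4p38 (R : pzRingType) (M : lmodType R)
  (hM : @projective_in_sigma R M) :
  subm (@lowest_radical R M) (@Rad R M).
Proof.
move=> x Nilx K maxK.
exact: fi_core_sub (Nilx _ (fi_core_prime hM maxK)).
Qed.
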